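(* Let $\gamma>0$ and, for $n\in\mathbb{N}$, let $D_n=\operatorname{diag}(1,2,\dots,n)\in\mathbb{R}^{n\times n}$ and \[ \mathcal{W}_n=\begin{pmatrix} 0 & D_n & 0\\ -D_n & 0 & \gamma D_n\\ 0 & -\gamma D_n & -D_n^2\end{pmatrix}\in\mathbb{R}^{3n\times 3n}, \] acting on $\mathcal{H}_n=\mathbb{C}^{3n}$ with the Euclidean norm, and let $T_n(t)=e^{t\mathcal{W}_n}$. Then the semigroups $T_n(\cdot)$ are uniformly polynomially stable of order $\alpha=2$: there exists a constant $M>0$, independent of $n$, such that \[ \big\|T_n(t)\mathcal{W}_n^{-1}\big\|_{\mathcal{L}(\mathcal{H}_n)}\le \frac{M}{t^{1/2}}\qquad\text{for all } t>0 \text{ and all } n\in\mathbb{N}. \]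
   Context: $\mathcal{W}_n$ is the matrix obtained in the paper from a modal approximation of the weakly coupled thermoelastic system under Dirichlet (displacement)–Neumann (temperature) boundary conditions. Each $\mathcal{W}_n$ is invertible and generates a contraction semigroup, since $\operatorname{Re}(\mathcal{W}_n y,y)=-\|D_n\theta\|^2\le 0$ for $y=(u,v,\theta)$. *)

From HB Require Import structures.
From mathcomp Require Import all_boot all_order all_algebra.
From mathcomp Require Import all_classical all_reals all_analysis.
From mathcomp Require Import complex.
Set Implicit Arguments.
Unset Strict Implicit.
Unset Printing Implicit Defensive.
Import Order.TTheory GRing.Theory Num.Theory.
Import numFieldNormedType.Exports.
Local Open Scope classical_set_scope.
Local Open Scope ring_scope.

Definition expmx (R : realType) (m : nat) (A : 'M[R]_m) : 'M[R]_m :=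
  lim ((fun N : nat => \sum_(k < N) (k`!%:R)^-1 *: (A ^+ k)) @ \oo).

Definition Dn (R : realType) (n : nat) : 'M[R]_n :=
  diag_mx (\row_(i < n) (i.+1)%:R).

(* The 3n x 3n matrix W_n (block structure n + (n + n)):
     [  0      D      0    ]
     [ -D      0     g D   ]
     [  0    -g D   -D^2   ]                                              *)
Definition Wn (R : realType) (gamma : R) (n : nat) : 'M[R]_(n + (n + n)) :=
  let D := Dn R n in
  block_mx 0 (row_mx D 0)
           (col_mx (- D) 0) (block_mx 0 (gamma *: D) (- (gamma *: D)) (- (D *m D))).

Definition Tn (R : realType) (gamma : R) (n : nat) (t : R) : 'M[R]_(n + (n + n)) :=
  expmx (t *: Wn gamma n).

Definition cnorm (R : realType) (m : nat) (v : 'cV[R[i]]_m) : R :=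
  Num.sqrt (\sum_(i < m) ((complex.Re (v i 0)) ^+ 2 + (complex.Im (v i 0)) ^+ 2)).

Definition cmx (R : realType) (m : nat) (A : 'M[R]_m) : 'M[R[i]]_m :=
  map_mx (fun x : R => (x%:C)%C) A.

Definition opnorm_le (R : realType) (m : nat) (A : 'M[R]_m) (c : R) : Prop :=
  forall v : 'cV[R[i]]_m, cnorm (cmx A *m v) <= c * cnorm v.

From HB Require Import structures.
From mathcomp Require Import all_boot all_order all_algebra.
From mathcomp Require Import all_classical all_reals all_analysis.
From mathcomp Require Import complex.
From mathcomp Require Import ring lra.
Import Order.TTheory GRing.Theory Num.Theory.
Import numFieldNormedType.Exports.
Local Open Scope classical_set_scope.
Local Open Scope ring_scope.
Set Implicit Arguments. Unset Strict Implicit. Unset Printing Implicit Defensive.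

(* The semigroups are in fact exponentially stable, uniformly in n, and
   sqrt t * e^(-rt) is bounded.  W_n splits into the modes k = 1, ..., n:
     u' = k v,   v' = -k u + g k theta,   theta' = -g k v - k^2 theta.
   For delta > 0 small in terms of g, the perturbed mode energy
     u^2 + v^2 + theta^2 + (delta g / k) v theta + (delta g^2 / (2k)) u v
   lies between 3/4 and 5/4 of u^2 + v^2 + theta^2, and its derivative along
   the flow is at most -(delta g^2 / 4) (u^2 + v^2 + theta^2), uniformly in k.
   Summing over the modes and applying Gronwall gives
   |T_n(t) y|^2 <= 5/3 e^(-delta g^2 t / 5) |y|^2.  Solving the mode equations
   gives |y|^2 <= (5 + 6 g^2 + 4 g^4) |W_n y|^2, so W_n^-1 is bounded
   uniformly in n as well. *)

Lemma exprZmx (R : comNzRingType) m (A : 'M[R]_m) (t : R) k :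
  (t *: A) ^+ k = t ^+ k *: A ^+ k.
Proof.
elim: k => [|k IH]; first by rewrite !expr0 scale1r.
by rewrite !exprS IH -!mulmxE -scalemxAl -scalemxAr scalerA.
Qed.

Lemma cvg_mx_entry (R : realType) m n (f : nat -> 'M[R]_(m, n)) (E : 'M[R]_(m, n)) :
  (forall i j, f N i j @[N --> \oo] --> E i j) -> f N @[N --> \oo] --> E.
Proof.
move=> fE; apply/(@cvg_mx_entourageP R m n (f @ \oo) _ E) => U entU.
apply: filter_forall => i; apply: filter_forall => j.
apply: (@filterS _ _ _ (fun N : 'M[R]_(m, n) => U (E i j, N i j))).
  by move=> N; rewrite inE.
exact: (cvg_entourageP _ _).1 (fE i j) U entU.
Qed.

Lemma cvg_sum_ord (R : realType) m (f : 'I_m -> nat -> R) (l : 'I_m -> R) :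
  (forall p, f p N @[N --> \oo] --> l p) ->
  (\sum_p f p N) @[N --> \oo] --> \sum_p l p.
Proof.
move=> fl; rewrite (_ : (fun N => _) = \sum_p f p); last first.
  by apply/funext => N; rewrite fct_sumE.
apply: (big_ind2 (fun F x => F N @[N --> \oo] --> x)) => //.
- exact: cvg_cst.
- by move=> F1 x1 F2 x2; apply: cvgD.
Qed.

Section MatrixExponential.
Variables (R : realType) (m : nat) (A : 'M[R]_m).

Lemma exprmx_entry_le (a : R) : 0 <= a -> (forall i j, `|A i j| <= a) ->
  forall k i j, `|(A ^+ k) i j| <= (m%:R * a) ^+ k.
Proof.
move=> a0 Aa; elim=> [|k IH] i j.
  by rewrite expr0 mxE; case: (i == j); rewrite /= ?normr1 ?normr0.
rewrite exprSr -mulmxE mxE exprSr.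
apply: le_trans (ler_norm_sum _ _ _) _.
apply: le_trans (_ : \sum_(p < m) ((m%:R * a) ^+ k * a) <= _).
  by apply: ler_sum => p _; rewrite normrM; apply: ler_pM.
by rewrite sumr_const card_ord -mulrnAr mulr_natl.
Qed.

(* [pseries (expmx_coef d i j) t] is the (i, j) entry of A^d e^(tA). *)
Definition expmx_coef (d : nat) (i j : 'I_m) : R^nat :=
  fun k => (k`!%:R)^-1 * (A ^+ (k + d)) i j.

Lemma is_cvg_pseries_expmx_coef d i j (t : R) : cvgn (pseries (expmx_coef d i j) t).
Proof.
pose a := \sum_p \sum_q `|A p q|.
have a0 : 0 <= a by apply: sumr_ge0 => p _; apply: sumr_ge0.
have Aa p q : `|A p q| <= a.
  rewrite /a (bigD1 p) //= (bigD1 q) //= -addrA lerDl.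
  by apply: addr_ge0; [apply: sumr_ge0|apply: sumr_ge0 => ? _; apply: sumr_ge0].
pose b := m%:R * a.
have b0 : 0 <= b by apply: mulr_ge0.
have Akb k : `|(A ^+ k) i j| <= b ^+ k by apply: exprmx_entry_le.
clearbody b; apply: normed_cvg.
have := @is_cvg_seriesZ _ _ (b ^+ d) (is_cvg_series_exp_coeff (b * `|t|)).
apply: series_le_cvg => k //=.
  by rewrite exp_coeffE /= !mulr_ge0 // ?exprn_ge0 // ?mulr_ge0 // invr_ge0.
rewrite exp_coeffE /expmx_coef !normrM normrX normfV normr_nat.
rewrite (_ : (b ^+ d *: _) k = (k`!%:R)^-1 * b ^+ (k + d) * `|t| ^+ k); last first.
  change (b ^+ d * ((k`!%:R)^-1 * (b * `|t|) ^+ k) = (k`!%:R)^-1 * b ^+ (k + d) * `|t| ^+ k).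
  by rewrite exprD exprMn; ring.
by apply: ler_pM => //; apply: ler_wpM2l; rewrite ?invr_ge0.
Qed.

Lemma pseries_diffs_expmx_coef d i j :
  pseries_diffs (expmx_coef d i j) = expmx_coef d.+1 i j.
Proof.
apply/funext => k; rewrite /pseries_diffs /expmx_coef factS natrM invfM !mulrA.
by rewrite mulfV ?pnatr_eq0 // mul1r addSnnS.
Qed.

Definition expmx_entry (i j : 'I_m) (t : R) : R := limn (pseries (expmx_coef 0 i j) t).

Lemma expmxZ_entry (t : R) i j : expmx (t *: A) i j = expmx_entry i j t.
Proof.
suff -> : expmx (t *: A) = \matrix_(i, j) expmx_entry i j t by rewrite mxE.
apply: cvg_lim => //; apply: cvg_mx_entry => i' j'; rewrite mxE.
rewrite (_ : (fun N => _) = pseries (expmx_coef 0 i' j') t).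
  exact: is_cvg_pseries_expmx_coef.
apply/funext => N; rewrite /pseries /series /= summxE big_mkord.
apply: eq_bigr => k _.
by rewrite exprZmx scalerA [in LHS]/GRing.scale /= mxE /expmx_coef addn0 mulrAC.
Qed.

Lemma expmx0 : expmx (0 *: A) = 1%:M.
Proof.
apply/matrixP => i j; rewrite expmxZ_entry /expmx_entry.
apply: lim_near_cst => //; exists 1%N => // -[|N] //= _.
rewrite /pseries /series /= big_nat_recl //= expr0 mulr1 big1 ?addr0.
  by rewrite /expmx_coef addn0 expr0 fact0 invr1 mul1r.
by move=> k _; rewrite expr0n /= mulr0.
Qed.

Lemma lim_pseries_expmx_coef1 i j (t : R) :
  limn (pseries (expmx_coef 1 i j) t) = \sum_p A i p * expmx_entry p j t.
Proof.
have -> : pseries (expmx_coef 1 i j) t =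
    (fun N => \sum_p A i p * pseries (expmx_coef 0 p j) t N).
  apply/funext => N; rewrite /pseries /series /=.
  under eq_bigr do rewrite /expmx_coef addn1 exprS -mulmxE mxE mulr_sumr mulr_suml.
  rewrite exchange_big /=; apply: eq_bigr => p _.
  by rewrite mulr_sumr; apply: eq_bigr => k _; rewrite /expmx_coef addn0; ring.
apply: cvg_lim => //; apply: cvg_sum_ord => p.
by apply: cvgMl_tmp; exact: is_cvg_pseries_expmx_coef.
Qed.

Lemma is_derive_expmx_entry i j (t : R) :
  is_derive t 1 (expmx_entry i j) (\sum_p A i p * expmx_entry p j t).
Proof.
rewrite -lim_pseries_expmx_coef1.
have := @pseries_snd_diffs R (expmx_coef 0 i j) (`|t| + 1) t.
rewrite !pseries_diffs_expmx_coef; apply; try exact: is_cvg_pseries_expmx_coef.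
by rewrite [X in _ < X]ger0_norm ?ltrDl.
Qed.

Lemma is_derive_expmx_mul (y0 : 'cV[R]_m) j (t : R) :
  is_derive t 1 (fun s => (expmx (s *: A) *m y0) j 0)
    ((A *m (expmx (t *: A) *m y0)) j 0).
Proof.
have -> : (fun s => (expmx (s *: A) *m y0) j 0) =
    \sum_l (fun s => expmx_entry j l s * y0 l 0).
  apply/funext => s; rewrite fct_sumE mxE.
  by apply: eq_bigr => l _; rewrite expmxZ_entry.
have -> : (A *m (expmx (t *: A) *m y0)) j 0 =
    \sum_l ((\sum_p A j p * expmx_entry p l t) * y0 l 0).
  rewrite mulmxA mxE; apply: eq_bigr => l _; rewrite mxE; congr (_ * _).
  by apply: eq_bigr => p _; rewrite expmxZ_entry.
apply: is_derive_sum => l.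
have := is_deriveM (is_derive_expmx_entry j l t) (is_derive_cst (y0 l 0) t 1).
rewrite (_ : (fun s => _) = expmx_entry j l * cst (y0 l 0)) //.
by move/is_derive_eq; apply; rewrite scaler0 add0r [LHS]mulrC.
Qed.

End MatrixExponential.

Lemma unitmx_of_inj (F : fieldType) m (A : 'M[F]_m) :
  (forall y : 'cV[F]_m, A *m y = 0 -> y = 0) -> A \in unitmx.
Proof.
move=> Ainj; rewrite -unitmx_tr -row_free_unit; apply: inj_row_free => v vA0.
apply: trmx_inj; rewrite trmx0; apply: Ainj.
by rewrite -[A]trmxK -trmx_mul vA0 trmx0.
Qed.

Lemma expRN_mul_le1 (R : realType) (x : R) : expR (- x) * x <= 1.
Proof.
rewrite -(expRxMexpNx_1 x) mulrC ler_wpM2r ?expR_ge0 //.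
by apply: le_trans (expR_ge1Dx _); rewrite lerDr.
Qed.

(* Gronwall: compare with the nonincreasing function s |-> e^(rs) f(s). *)
Lemma le_expR_decay (R : realType) (f : R -> R) (r : R) :
  (forall s, derivable f s 1) -> (forall s, 'D_1 f s <= - r * f s) ->
  forall t, 0 <= t -> f t <= expR (- (r * t)) * f 0.
Proof.
move=> fd f'le t t0; pose h s := expR (r * s) * f s.
have is_derive_h (s : R) : is_derive s 1 h (expR (r * s) * ('D_1 f s + r * f s)).
  have er : is_derive s 1 (fun x => expR (r * x)) (expR (r * s) * r).
    apply: is_derive1_comp; apply: is_derive_eq (is_deriveZ r (is_derive_id s 1)) _.
    by rewrite /GRing.scale /= mulr1.
  apply: is_derive_eq (is_deriveM er (derivableP (fd s))) _.
  by rewrite /GRing.scale /=; ring.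
have hd (s : R) : derivable h s 1 by have [] := is_derive_h s.
have h_nincr : h t <= h 0.
  apply: (@ler0_derive1_nincry R h 0) => //.
  - move=> x _; rewrite derive1E derive_val mulr_ge0_le0 ?expR_ge0 //.
    by rewrite -lerBrDr sub0r -mulNr f'le.
  - by apply: derivable_within_continuous => x _; exact: hd.
have -> : f t = expR (- (r * t)) * h t.
  by rewrite /h mulrA [_ * expR _]mulrC expRxMexpNx_1 mul1r.
have -> : f 0 = h 0 by rewrite /h mulr0 expR0 mul1r.
by apply: ler_wpM2l; first exact: expR_ge0.
Qed.

Definition sqnorm (R : realDomainType) m (y : 'cV[R]_m) : R := \sum_r y r 0 ^+ 2.

Lemma sqnorm_ge0 (R : realDomainType) m (y : 'cV[R]_m) : 0 <= sqnorm y.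
Proof. by apply: sumr_ge0 => r _; apply: sqr_ge0. Qed.

Lemma sqnorm_eq0 (R : realDomainType) m (y : 'cV[R]_m) : sqnorm y = 0 -> y = 0.
Proof.
move=> /psumr_eq0P y0; apply/matrixP => r c; rewrite (ord1 c) mxE.
by apply/eqP; rewrite -sqrf_eq0; apply/eqP/y0 => // ? _; apply: sqr_ge0.
Qed.

Section ComplexLift.
Variable R : realType.

Lemma Re_sum m (f : 'I_m -> R[i]) : complex.Re (\sum_j f j) = \sum_j complex.Re (f j).
Proof. by apply: (big_morph (@complex.Re R)) => [[a b] [c e]|]. Qed.

Lemma Im_sum m (f : 'I_m -> R[i]) : complex.Im (\sum_j f j) = \sum_j complex.Im (f j).
Proof. by apply: (big_morph (@complex.Im R)) => [[a b] [c e]|]. Qed.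

(* A real matrix acts on the real and imaginary parts separately. *)
Lemma opnorm_le_sqnorm m (B : 'M[R]_m) (c : R) : 0 <= c ->
  (forall x : 'cV[R]_m, sqnorm (B *m x) <= c * sqnorm x) -> opnorm_le B (Num.sqrt c).
Proof.
move=> c0 Bc v; pose vr := \col_j complex.Re (v j 0); pose vi := \col_j complex.Im (v j 0).
have cnormE (w : 'cV[R[i]]_m) :
    cnorm w = Num.sqrt (sqnorm (\col_j complex.Re (w j 0)) + sqnorm (\col_j complex.Im (w j 0))).
  by rewrite /cnorm /sqnorm -big_split; congr Num.sqrt; apply: eq_bigr => j _; rewrite !mxE.
have ReB : \col_j complex.Re ((cmx B *m v) j 0) = B *m vr.
  apply/matrixP => j k; rewrite !mxE Re_sum; apply: eq_bigr => l _.
  by rewrite !mxE; case: (v l 0) => a b /=; rewrite mul0r subr0.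
have ImB : \col_j complex.Im ((cmx B *m v) j 0) = B *m vi.
  apply/matrixP => j k; rewrite !mxE Im_sum; apply: eq_bigr => l _.
  by rewrite !mxE; case: (v l 0) => a b /=; rewrite mul0r addr0.
rewrite !cnormE ReB ImB -/vr -/vi -sqrtrM // ler_sqrt; last first.
  by rewrite mulr_ge0 // addr_ge0 // sqnorm_ge0.
by rewrite mulrDr lerD.
Qed.

End ComplexLift.

Section ModeEstimates.
Variable R : realFieldType.
Implicit Types a b g d k u v w du dv dw : R.

Definition mode_energy a b u v w : R :=
  u ^+ 2 + v ^+ 2 + w ^+ 2 + a * (v * w) + b * (u * v).

Definition mode_energy_deriv a b u v w du dv dw : R :=
  2 * (u * du + v * dv + w * dw) + a * (dv * w + v * dw) + b * (du * v + u * dv).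

Lemma mode_energy_equiv a b u v w : 0 <= a <= 1/4 -> 0 <= b <= 1/4 ->
  3/4 * (u ^+ 2 + v ^+ 2 + w ^+ 2) <= mode_energy a b u v w
  <= 5/4 * (u ^+ 2 + v ^+ 2 + w ^+ 2).
Proof.
move=> /andP[a0 a1] /andP[b0 b1]; rewrite /mode_energy.
have := sqr_ge0 (v - w); have := sqr_ge0 (v + w).
have := sqr_ge0 (u - v); have := sqr_ge0 (u + v).
by move=> *; apply/andP; split; nra.
Qed.

Lemma mode_weight_small g d : 0 < d ->
  d * (2 * (1 + g ^+ 2 + (g ^+ 2 / 2 - 1) ^+ 2)) <= 1 ->
  d * g <= 1/4 /\ d * g ^+ 2 / 2 <= 1/4.
Proof.
move=> d0 hd.
have := mulr_ge0 (ltW d0) (sqr_ge0 (g - 1)).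
have := mulr_ge0 (ltW d0) (sqr_ge0 (g ^+ 2 / 2 - 1)).
by move=> *; split; nra.
Qed.

(* The cross terms, of order 1/k, transfer the damping -k^2 w^2 of the
   temperature to u and v, uniformly in k. *)
Lemma mode_energy_dissipation g d k u v w : 0 < g -> 0 < d ->
  d * (2 * (1 + g ^+ 2 + (g ^+ 2 / 2 - 1) ^+ 2)) <= 1 -> 1 <= k ->
  mode_energy_deriv (d * g / k) (d * g ^+ 2 / 2 / k) u v w
    (k * v) (- (k * u) + g * (k * w)) (- (g * (k * v)) - k * (k * w))
  <= - (d * g ^+ 2 / 4) * (u ^+ 2 + v ^+ 2 + w ^+ 2).
Proof.
move=> g0 d0 hd k1; have k0 : k != 0 by rewrite gt_eqF // (lt_le_trans _ k1).
set c := g ^+ 2 / 2 - 1.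
set C := -2 * k ^+ 2 + 5/4 * d * g ^+ 2 + d * k ^+ 2 + d * c ^+ 2.
have -> : mode_energy_deriv (d * g / k) (d * g ^+ 2 / 2 / k) u v w
    (k * v) (- (k * u) + g * (k * w)) (- (g * (k * v)) - k * (k * w)) =
  - (d * g ^+ 2 / 4) * (u ^+ 2 + v ^+ 2 + w ^+ 2)
  - d * ((g / 2 * v + k * w) ^+ 2 + (g / 2 * u - c * w) ^+ 2) + C * w ^+ 2.
  by rewrite /mode_energy_deriv /C /c; field.
have C0 : C <= 0.
  have k2 : 1 <= k ^+ 2 by rewrite expr_ge1 // (le_trans _ k1).
  have := sqr_ge0 c; have := sqr_ge0 g; rewrite /C /c in hd *; nra.
have := mulr_ge0 (ltW d0) (addr_ge0 (sqr_ge0 (g / 2 * v + k * w)) (sqr_ge0 (g / 2 * u - c * w))).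
have := sqr_ge0 w; nra.
Qed.

Lemma sqr_scale_le u k : 0 <= k <= 1 -> (u * k) ^+ 2 <= u ^+ 2.
Proof.
move=> /andP[k0 k1]; rewrite exprMn ler_piMr ?sqr_ge0 //.
by rewrite expr_le1.
Qed.

(* Writing (a, b, c) for the image of (u, v, w): v = a/k, w = -(c + g a)/k^2,
   u = g w - b/k. *)
Lemma mode_coercive g k u v w : 1 <= k ->
  u ^+ 2 + v ^+ 2 + w ^+ 2 <= (5 + 6 * g ^+ 2 + 4 * g ^+ 4) *
    ((k * v) ^+ 2 + (- (k * u) + g * (k * w)) ^+ 2 + (- (g * (k * v)) - k * (k * w)) ^+ 2).
Proof.
move=> k1; have kp : 0 < k by apply: lt_le_trans k1.
have k0 : k != 0 by rewrite gt_eqF.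
set a := k * v; set b := - (k * u) + g * (k * w); set c := - (g * (k * v)) - k * (k * w).
have p01 : 0 <= k^-1 <= 1 by rewrite invr_ge0 ltW //= invr_le1 // unitfE.
have p2_01 : 0 <= k^-1 * k^-1 <= 1.
  by case/andP: p01 => p0 p1; rewrite mulr_ge0 //= mulr_ile1.
have ev : v = a * k^-1 by rewrite /a mulrC mulKf.
have ew : w = - (c + g * a) * (k^-1 * k^-1) by rewrite /c /a; field.
have eu : u = g * w - b * k^-1 by rewrite /b ew /c /a; field.
have sq_add (x y : R) : (x + y) ^+ 2 <= 2 * x ^+ 2 + 2 * y ^+ 2 by have := sqr_ge0 (x - y); nra.
have hv : v ^+ 2 <= a ^+ 2 by rewrite ev; apply: sqr_scale_le.
have hw : w ^+ 2 <= 2 * c ^+ 2 + 2 * g ^+ 2 * a ^+ 2.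
  rewrite ew; apply: le_trans (sqr_scale_le _ p2_01) _; rewrite sqrrN.
  by apply: le_trans (sq_add _ _) _; rewrite exprMn !mulrA.
have hu : u ^+ 2 <= 2 * g ^+ 2 * w ^+ 2 + 2 * b ^+ 2.
  rewrite {1}eu; apply: le_trans (sq_add _ _) _; rewrite sqrrN exprMn mulrA lerD2l.
  by apply: ler_wpM2l => //; apply: sqr_scale_le.
have -> : g ^+ 4 = g ^+ 2 * g ^+ 2 by rewrite -exprD.
have := sqr_ge0 a; have := sqr_ge0 b; have := sqr_ge0 c; have := sqr_ge0 g; nra.
Qed.

End ModeEstimates.

Lemma is_derive_mode_energy (R : realType) (a b : R) (fu fv fw : R -> R) (t du dv dw : R) :
  is_derive t 1 fu du -> is_derive t 1 fv dv -> is_derive t 1 fw dw ->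
  is_derive t 1 (fun s => mode_energy a b (fu s) (fv s) (fw s))
    (mode_energy_deriv a b (fu t) (fv t) (fw t) du dv dw).
Proof.
move=> hu hv hw.
have -> : (fun s => mode_energy a b (fu s) (fv s) (fw s)) =
    fu * fu + fv * fv + fw * fw + a \*: (fv * fw) + b \*: (fu * fv).
  by apply/funext => s; rewrite /mode_energy !expr2.
have := is_deriveD (is_deriveD (is_deriveD (is_deriveD (is_deriveM hu hu)
  (is_deriveM hv hv)) (is_deriveM hw hw)) (is_deriveZ a (is_deriveM hv hw)))
  (is_deriveZ b (is_deriveM hu hv)).
by move/is_derive_eq; apply; rewrite /mode_energy_deriv /GRing.scale /=; ring.
Qed.

Section Thermoelastic.
Variables (R : realType) (g : R) (n : nat).
Local Notation state := 'cV[R]_(n + (n + n)).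
Implicit Types (y z : state) (i : 'I_n).

Definition disp y i : R := y (lshift (n + n) i) 0.
Definition vel y i : R := y (rshift n (lshift n i)) 0.
Definition temp y i : R := y (rshift n (rshift n i)) 0.

Lemma sqnorm_modes y :
  sqnorm y = \sum_i (disp y i ^+ 2 + vel y i ^+ 2 + temp y i ^+ 2).
Proof. by rewrite /sqnorm big_split_ord /= big_split_ord /= !big_split /= addrA. Qed.

Lemma Wn_mul y : Wn g n *m y =
  col_mx (Dn R n *m usubmx (dsubmx y))
    (col_mx (- (Dn R n *m usubmx y) + g *: (Dn R n *m dsubmx (dsubmx y)))
            (- (g *: (Dn R n *m usubmx (dsubmx y))) - Dn R n *m (Dn R n *m dsubmx (dsubmx y)))).
Proof.
rewrite -{1}(vsubmxK y) -{1}(vsubmxK (dsubmx y)) /Wn mul_block_col mul_row_col.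
rewrite mul_block_col mul_col_mx !mul0mx add_col_mx !add0r !addr0.
by rewrite !mulNmx -!scalemxAl mulmxA.
Qed.

Lemma disp_Wn y i : disp (Wn g n *m y) i = i.+1%:R * vel y i.
Proof. by rewrite /disp Wn_mul col_mxEu /Dn mul_diag_mx !mxE. Qed.

Lemma vel_Wn y i :
  vel (Wn g n *m y) i = - (i.+1%:R * disp y i) + g * (i.+1%:R * temp y i).
Proof. by rewrite /vel Wn_mul col_mxEd col_mxEu /Dn !mul_diag_mx !mxE. Qed.

Lemma temp_Wn y i :
  temp (Wn g n *m y) i = - (g * (i.+1%:R * vel y i)) - i.+1%:R * (i.+1%:R * temp y i).
Proof. by rewrite /temp Wn_mul !col_mxEd /Dn !mul_diag_mx !mxE. Qed.

Definition coercivity_const : R := 5 + 6 * g ^+ 2 + 4 * g ^+ 4.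

Lemma coercivity_const_gt0 : 0 < coercivity_const.
Proof.
have := sqr_ge0 g; have : 0 <= g ^+ 4 by rewrite (exprM g 2 2) sqr_ge0.
by rewrite /coercivity_const; lra.
Qed.

Lemma sqnorm_le_Wn y : sqnorm y <= coercivity_const * sqnorm (Wn g n *m y).
Proof.
rewrite !sqnorm_modes mulr_sumr; apply: ler_sum => i _.
by rewrite disp_Wn vel_Wn temp_Wn; apply: mode_coercive; rewrite ler1n.
Qed.

Lemma Wn_unit : Wn g n \in unitmx.
Proof.
apply: unitmx_of_inj => y Wy0; apply: sqnorm_eq0; apply/eqP.
rewrite eq_le sqnorm_ge0 andbT; apply: le_trans (sqnorm_le_Wn y) _.
by rewrite Wy0 (_ : sqnorm _ = 0) ?mulr0 // /sqnorm big1 // => r _; rewrite mxE expr0n.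
Qed.

Section Lyapunov.
Variable d : R.
Hypotheses (g0 : 0 < g) (d0 : 0 < d)
  (hd : d * (2 * (1 + g ^+ 2 + (g ^+ 2 / 2 - 1) ^+ 2)) <= 1).

Definition lyap y : R := \sum_(i < n)
  mode_energy (d * g / i.+1%:R) (d * g ^+ 2 / 2 / i.+1%:R) (disp y i) (vel y i) (temp y i).

Definition lyap_deriv y z : R := \sum_(i < n)
  mode_energy_deriv (d * g / i.+1%:R) (d * g ^+ 2 / 2 / i.+1%:R)
    (disp y i) (vel y i) (temp y i) (disp z i) (vel z i) (temp z i).

Lemma lyap_equiv y : 3/4 * sqnorm y <= lyap y <= 5/4 * sqnorm y.
Proof.
have [dg dg2] := mode_weight_small d0 hd.
have weight01 (c : R) (i : 'I_n) : 0 <= c <= 1/4 -> 0 <= c / i.+1%:R <= 1/4.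
  move=> /andP[c0 c1]; rewrite divr_ge0 //=.
  by apply: le_trans c1; rewrite ler_pdivrMr ?ler_peMr // ?ler1n.
have hgd : 0 <= d * g <= 1/4 by rewrite dg mulr_ge0 ?ltW.
have hg2d : 0 <= d * g ^+ 2 / 2 <= 1/4 by rewrite dg2 !mulr_ge0 ?ltW ?sqr_ge0.
rewrite sqnorm_modes !mulr_sumr /lyap; apply/andP; split; apply: ler_sum => i _;
  by case/andP: (mode_energy_equiv (disp y i) (vel y i) (temp y i)
                   (weight01 _ i hgd) (weight01 _ i hg2d)).
Qed.

Lemma is_derive_lyap (c : R -> state) (c' : state) (t : R) :
  (forall j, is_derive t 1 (fun s => c s j 0) (c' j 0)) ->
  is_derive t 1 (fun s => lyap (c s)) (lyap_deriv (c t) c').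
Proof.
move=> c'E; rewrite (_ : (fun s => _) = \sum_(i < n) (fun s => mode_energy
   (d * g / i.+1%:R) (d * g ^+ 2 / 2 / i.+1%:R) (disp (c s) i) (vel (c s) i) (temp (c s) i))).
  by apply: is_derive_sum => i; apply: is_derive_mode_energy; apply: c'E.
by apply/funext => s; rewrite fct_sumE.
Qed.

Lemma lyap_deriv_Wn y : lyap_deriv y (Wn g n *m y) <= - (d * g ^+ 2 / 4) * sqnorm y.
Proof.
rewrite sqnorm_modes mulr_sumr; apply: ler_sum => i _.
by rewrite disp_Wn vel_Wn temp_Wn; apply: mode_energy_dissipation; rewrite ?ler1n.
Qed.

Lemma lyap_Tn_decay y0 (t : R) : 0 <= t ->
  lyap (Tn g n t *m y0) <= expR (- (d * g ^+ 2 / 5 * t)) * lyap y0.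
Proof.
have traj' (s : R) : is_derive s 1 (fun r => lyap (Tn g n r *m y0))
    (lyap_deriv (Tn g n s *m y0) (Wn g n *m (Tn g n s *m y0))).
  by apply: is_derive_lyap => j; apply: is_derive_expmx_mul.
move=> t0; rewrite -[X in _ * lyap X]mul1mx -(expmx0 (Wn g n)).
apply: (le_expR_decay (f := fun s => lyap (Tn g n s *m y0))) t0 => [s | s].
  by have [] := traj' s.
rewrite derive_val; apply: le_trans (lyap_deriv_Wn _) _.
have /andP[_ +] := lyap_equiv (Tn g n s *m y0).
have := sqnorm_ge0 (Tn g n s *m y0); have := mulr_gt0 d0 (exprn_gt0 2 g0); nra.
Qed.

Lemma sqnorm_Tn_invWn_le (t : R) x : 0 <= t ->
  sqnorm (Tn g n t *m invmx (Wn g n) *m x)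
  <= 5/3 * coercivity_const * expR (- (d * g ^+ 2 / 5 * t)) * sqnorm x.
Proof.
move=> t0; set y0 := invmx (Wn g n) *m x; set e := expR _.
have Wy0 : Wn g n *m y0 = x by rewrite /y0 mulKVmx // Wn_unit.
have /andP[lyap_lb _] := lyap_equiv (Tn g n t *m y0).
have /andP[_ lyap_ub] := lyap_equiv y0.
rewrite -mulmxA -/y0 (_ : 5/3 * _ * e * _ = 4/3 * (e * (5/4 * (coercivity_const * sqnorm x))));
  last by field.
apply: le_trans (_ : _ <= 4/3 * lyap (Tn g n t *m y0)) _; first lra.
apply: ler_wpM2l => //; apply: le_trans (lyap_Tn_decay y0 t0) _.
apply: ler_wpM2l; first exact: expR_ge0.
apply: le_trans lyap_ub _; apply: ler_wpM2l => //.
by rewrite -Wy0 sqnorm_le_Wn.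
Qed.

End Lyapunov.

End Thermoelastic.

Unset Implicit Arguments.

Theorem theorem4p8 (R : realType) (gamma : R) (hgamma : 0 < gamma) :
  exists M : R, 0 < M /\
    forall (n : nat) (t : R), 0 < t ->
      opnorm_le (Tn gamma n t *m invmx (Wn gamma n)) (M / Num.sqrt t).
Proof.
pose c := 2 * (1 + gamma ^+ 2 + (gamma ^+ 2 / 2 - 1) ^+ 2).
have c0 : 0 < c by rewrite mulr_gt0 // ltr_wpDr ?sqr_ge0 // ltr_wpDr ?sqr_ge0.
have d0 : 0 < c^-1 by rewrite invr_gt0.
have hd : c^-1 * c <= 1 by rewrite mulVf ?gt_eqF.
pose r := c^-1 * gamma ^+ 2 / 5.
have r0 : 0 < r by rewrite divr_gt0 // mulr_gt0 // exprn_gt0.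
pose K := 5/3 * coercivity_const gamma / r.
have K0 : 0 < K by rewrite divr_gt0 // mulr_gt0 // coercivity_const_gt0.
exists (Num.sqrt K); split => [|n t t0]; first by rewrite sqrtr_gt0.
rewrite -sqrtrV ?(ltW t0) // -sqrtrM ?(ltW K0) //.
apply: opnorm_le_sqnorm => [|x]; first by rewrite divr_ge0 ?(ltW K0) ?(ltW t0).
apply: le_trans (sqnorm_Tn_invWn_le hgamma d0 hd x (ltW t0)) _.
apply: ler_wpM2r; first exact: sqnorm_ge0.
rewrite -/r (_ : K / t = 5/3 * coercivity_const gamma * (r * t)^-1); last first.
  by rewrite /K [in RHS]invfM [RHS]mulrA.
apply: ler_wpM2l; first by rewrite mulr_ge0 // ltW // coercivity_const_gt0.
by rewrite -[X in _ <= X]mul1r ler_pdivlMr ?mulr_gt0 // expRN_mul_le1.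
Qed.
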